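(* Let $\Gamma$ be a connected finite simple graph on $N\ge3$ vertices whose minimum vertex degree $d$ satisfies $d\ge2$. Then $\varepsilon\le\frac{\sqrt{d-1}}{d}$.
   Context: For a finite simple graph $\Gamma=(V,E)$ without isolated vertices, $\deg v$ is the number of neighbours of $v$ and $\mathcal N(v)=\{w\in V: w\sim v\}$. The normalized Laplacian acts on functions $f:V\to\mathbb R$ by $\Delta f(v)=f(v)-\frac{1}{\deg v}\sum_{w\sim v}f(w)$; its eigenvalues are $0=\lambda_1\le\lambda_2\le\dots\le\lambda_N$, and $\varepsilon:=\min_i|1-\lambda_i|$. $d$ denotes the minimum vertex degree. *)

From HB Require Import structures.
From mathcomp Require Import all_boot all_order all_algebra.
From mathcomp Require Import reals.
Set Implicit Arguments. Unset Strict Implicit. Unset Printing Implicit Defensive.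
Import Order.TTheory GRing.Theory Num.Theory.
Local Open Scope ring_scope.

Definition simple_graph (T : finType) (adj : rel T) : Prop :=
  symmetric adj /\ irreflexive adj.

Definition connected_graph (T : finType) (adj : rel T) : Prop :=
  forall x y : T, connect adj x y.

Definition deg (T : finType) (adj : rel T) (v : T) : nat := #|[set w | adj v w]|.

(* minimum vertex degree (the index #|T| is an upper bound for every degree) *)
Definition mindeg (T : finType) (adj : rel T) : nat :=
  \big[minn/#|T|]_(v : T) deg adj v.

Definition nlap (R : realType) (T : finType) (adj : rel T) (f : T -> R) (v : T) : R :=
  f v - ((deg adj v)%:R)^-1 * \sum_(w | adj v w) f w.

Definition nlap_eigenvalue (R : realType) (T : finType) (adj : rel T) (lam : R) : Prop :=
  exists f : T -> R, (exists v, f v != 0) /\ forall v, nlap adj f v = lam * f v.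

(* Let S = D^-1/2 A D^-1/2 be the normalized adjacency matrix: its eigenvalues
   are the 1 - lambda, and |1 - lambda| <= 1 by a maximum principle. In an
   orthonormal eigenbasis the degree-weighted moments tr(D S^k) become
   sum_j w_j nu_j^k with w_j >= 0 and sum_j w_j = tr D. Counting walks gives
   tr(D S^2) = N < tr D, and counting common neighbours gives
   tr(D S^4) >= (1 + c) N - c tr D for c = (d - 1)/d^2. If every nu_j^2 > c,
   each term w_j (nu_j^2 - 1)(nu_j^2 - c) would be <= 0 and one of them < 0,
   contradicting the bound on the fourth moment; so some nu_j^2 <= c. *)

From HB Require Import structures.
From mathcomp Require Import all_boot all_order all_algebra.
From mathcomp Require Import reals.
From mathcomp Require Import spectral sesquilinear complex.
From mathcomp Require Import ring lra.
Import Order.TTheory GRing.Theory Num.Theory.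
Local Open Scope ring_scope.
Local Open Scope sesquilinear_scope.

Lemma exists_le_of_moments {R : realFieldType} {I : finType} {w t : I -> R} (c : R) :
  (forall j, 0 <= w j) -> (forall j, t j <= 1) ->
  \sum_j w j * t j < \sum_j w j ->
  (1 + c) * (\sum_j w j * t j) - c * \sum_j w j <= \sum_j w j * t j ^+ 2 ->
  exists j, t j <= c.
Proof.
move=> w_ge0 t_le1 lt_w_tw moment2.
apply/existsP; apply: contraLR moment2 => /existsPn tc; rewrite -ltNge.
have ct j : c < t j by rewrite ltNge tc.
pose q j := w j * ((t j - 1) * (t j - c)).
have q_le0 j : q j <= 0.
  by rewrite /q mulr_ge0_le0 // mulr_le0_ge0 ?subr_le0 ?subr_ge0 // ltW.
have [j wt_lt] : exists j, w j * t j < w j.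
  apply/existsP; apply: contraLR lt_w_tw => /existsPn h.
  by rewrite -leNgt; apply: ler_sum => j _; rewrite leNgt h.
have qj_lt0 : q j < 0.
  rewrite /q mulrA pmulr_llt0 ?subr_gt0 //.
  by rewrite mulrBr mulr1 subr_lt0.
have sum_q_lt0 : \sum_j q j < 0.
  rewrite (bigD1 j) //=.
  have : \sum_(i | i != j) q i <= 0 by apply: sumr_le0 => i _.
  lra.
have -> : \sum_j w j * t j ^+ 2 =
    \sum_j q j + (1 + c) * (\sum_j w j * t j) - c * \sum_j w j.
  rewrite !mulr_sumr -!sumrN -!big_split /=; apply: eq_bigr => k _.
  rewrite /q; ring.
lra.
Qed.

Section UnitaryConjugation.
Variables (C : numClosedFieldType) (n : nat) (U : 'M[C]_n).

Lemma unitary_diag_entry (a : 'rV[C]_n) i :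
  (U^t* *m diag_mx a *m U) i i = \sum_j a 0 j * ((U j i)^* * U j i)%R.
Proof. by rewrite mul_mx_diag !mxE; apply: eq_bigr => j _; rewrite !mxE; ring. Qed.

Lemma unitary_diag_mul (a b : 'rV[C]_n) : U \is unitarymx ->
  (U^t* *m diag_mx a *m U) *m (U^t* *m diag_mx b *m U) =
  U^t* *m diag_mx (\row_j (a 0 j * b 0 j)) *m U.
Proof.
move=> /unitarymxP UU; rewrite -mulmx_diag !mulmxA.
by rewrite -[_ *m U *m U^t*]mulmxA UU mulmx1.
Qed.
End UnitaryConjugation.

Section SymmetricSpectral.
Variables (R : realType) (n : nat) (S : 'M[R]_n).
Hypothesis S_sym : S^T = S.
Local Notation C := (R[i] : numClosedFieldType).
Local Notation toC := (real_complex R).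
Local Notation Sc := (map_mx toC S : 'M[C]_n).
Local Notation U := (spectralmx Sc).
Local Notation sp := (spectral_diag Sc).

(* [sym_weight j i] = |U j i|^2 is the mass that the spectral measure of the
   i-th basis vector puts on the eigenvalue [sym_eigval j]. *)
Definition sym_eigval j := complex.Re (sp 0 j).
Definition sym_weight j i := complex.Re (U j i) ^+ 2 + complex.Im (U j i) ^+ 2.

Lemma symmx_hermitian : Sc \is hermsymmx.
Proof.
apply: realsym_hermsym.
  by apply/is_hermitianmxP; rewrite expr0 scale1r map_mx_id // -{1}S_sym map_trmx.
by apply/mxOverP => i j; rewrite mxE complex_real.
Qed.

Lemma symmx_unitary : U \is unitarymx. Proof. exact: spectral_unitarymx. Qed.

Lemma symmx_spectral : Sc = U^t* *m diag_mx sp *m U.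
Proof.
have /orthomx_spectralP := hermitian_normalmx symmx_hermitian.
by rewrite invmx_unitary // symmx_unitary.
Qed.

Lemma spectral_diagE j : sp 0 j = toC (sym_eigval j).
Proof.
have /mxOverP/(_ 0 j) := hermitian_spectral_diag_real symmx_hermitian.
by rewrite /sym_eigval complexRe => /Creal_ReP.
Qed.

Lemma sym_weightE j i : toC (sym_weight j i) = ((U j i)^* * U j i)%R.
Proof. by rewrite add_Re2_Im2 normCKC. Qed.

Lemma sym_weight_ge0 j i : 0 <= sym_weight j i.
Proof. by rewrite addr_ge0 ?sqr_ge0. Qed.

Lemma eigenvalue_sym_eigval j : eigenvalue S (sym_eigval j).
Proof.
suff : eigenvalue Sc (sp 0 j) by rewrite spectral_diagE eigenvalue_map.
apply/eigenvalueP; exists (row j U).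
  rewrite -row_mul [X in _ *m X]symmx_spectral !mulmxA (unitarymxP symmx_unitary) mul1mx.
  by apply/rowP => k; rewrite mul_diag_mx !mxE.
apply/eqP => Uj0; have /row_unitarymxP/(_ j j) := symmx_unitary.
by rewrite Uj0 dotmxE mul0mx mxE eqxx => /eqP; rewrite eq_sym oner_eq0.
Qed.

Lemma diag_entry_sym_weight (M : 'M[R]_n) a i :
  map_mx toC M = U^t* *m diag_mx a *m U ->
  toC (M i i) = \sum_j a 0 j * toC (sym_weight j i).
Proof.
move=> /(congr1 (fun A : 'M[C]_n => A i i)); rewrite mxE unitary_diag_entry => ->.
by apply: eq_bigr => j _; rewrite sym_weightE.
Qed.

Lemma sum_sym_weight i : \sum_j sym_weight j i = 1.
Proof.
have UU : U^t* *m U = 1%:M.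
  by rewrite -invmx_unitary ?symmx_unitary // mulVmx // spectral_unit.
have := @diag_entry_sym_weight 1%:M (const_mx 1) i.
rewrite map_mx1 diag_const_mx mulmx1 mxE eqxx => /(_ (esym UU)) sum_w.
apply: (@complexI R); rewrite rmorph_sum /= sum_w.
by apply: eq_bigr => j _; rewrite mxE mul1r.
Qed.

Lemma symmx_sqr_spectral : Sc *m Sc = U^t* *m diag_mx (\row_j (sp 0 j ^+ 2)) *m U.
Proof.
have -> : \row_j (sp 0 j ^+ 2) = \row_j (sp 0 j * sp 0 j).
  by apply/rowP => j; rewrite !mxE expr2.
by rewrite [in LHS]symmx_spectral unitary_diag_mul ?symmx_unitary.
Qed.

Lemma symmx_sqr_diag i : (S *m S) i i = \sum_j sym_weight j i * sym_eigval j ^+ 2.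
Proof.
apply: (@complexI R); rewrite rmorph_sum.
rewrite (diag_entry_sym_weight _ _ _ (etrans (map_mxM _ _ _) symmx_sqr_spectral)).
by apply: eq_bigr => j _; rewrite mxE spectral_diagE rmorphM rmorphXn mulrC; reflexivity.
Qed.

Lemma symmx_pow4_diag i :
  (S *m S *m (S *m S)) i i = \sum_j sym_weight j i * sym_eigval j ^+ 4.
Proof.
have Sc4 : Sc *m Sc *m (Sc *m Sc) = U^t* *m diag_mx (\row_j (sp 0 j ^+ 4)) *m U.
  have -> : \row_j (sp 0 j ^+ 4) = \row_j ((\row_j (sp 0 j ^+ 2)) 0 j ^+ 2).
    by apply/rowP => j; rewrite !mxE -exprM.
  by rewrite symmx_sqr_spectral unitary_diag_mul ?symmx_unitary.
apply: (@complexI R); rewrite rmorph_sum.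
rewrite (diag_entry_sym_weight _ (\row_j (sp 0 j ^+ 4)) i); last by rewrite !map_mxM Sc4.
by apply: eq_bigr => j _; rewrite mxE spectral_diagE rmorphM rmorphXn mulrC; reflexivity.
Qed.

Lemma symmx_small_eigenvalue (dl : 'I_n -> R) (c : R) :
  (forall i, 0 <= dl i) -> (forall nu, eigenvalue S nu -> nu ^+ 2 <= 1) ->
  \sum_i dl i * (S *m S) i i < \sum_i dl i ->
  (1 + c) * (\sum_i dl i * (S *m S) i i) - c * \sum_i dl i <=
    \sum_i dl i * (S *m S *m (S *m S)) i i ->
  exists2 nu, eigenvalue S nu & nu ^+ 2 <= c.
Proof.
move=> dl_ge0 eig_le1.
pose w j := \sum_i dl i * sym_weight j i.
have weightE (F h : 'I_n -> R) :
    (forall i, F i = \sum_j sym_weight j i * h j) -> \sum_i dl i * F i = \sum_j w j * h j.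
  move=> FE; under eq_bigr do rewrite FE mulr_sumr.
  rewrite exchange_big /=; apply: eq_bigr => j _.
  by rewrite /w mulr_suml; apply: eq_bigr => i _; rewrite mulrA.
have sum_w : \sum_i dl i = \sum_j w j.
  rewrite /w exchange_big /=.
  by apply: eq_bigr => i _; rewrite -mulr_sumr sum_sym_weight mulr1.
rewrite sum_w (weightE _ _ symmx_sqr_diag) (weightE _ _ symmx_pow4_diag).
move=> lt_moment moment.
have w_ge0 j : 0 <= w j by apply: sumr_ge0 => i _; rewrite mulr_ge0 ?sym_weight_ge0.
have t_le1 j : sym_eigval j ^+ 2 <= 1 by apply/eig_le1/eigenvalue_sym_eigval.
have [|j nu_c] := exists_le_of_moments c w_ge0 t_le1 lt_moment.
  by under [X in _ <= X]eq_bigr do rewrite -exprM.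
by exists (sym_eigval j); first exact: eigenvalue_sym_eigval.
Qed.
End SymmetricSpectral.

Arguments symmx_small_eigenvalue {R n S}.

Lemma sum_sqr_le_sqr_sum (R : realDomainType) (I : finType) (u : I -> R) :
  (forall k, 0 <= u k) -> \sum_k u k ^+ 2 <= (\sum_k u k) ^+ 2.
Proof.
move=> u_ge0; rewrite expr2 mulr_suml; apply: ler_sum => k _.
by rewrite expr2 ler_wpM2l // (bigD1 k) //= lerDl sumr_ge0.
Qed.

Lemma indicator_moment_ineq {R : realFieldType} {I : finType} {a x : I -> R} {d : R} :
  (forall k, a k * a k = a k) -> (forall k, 0 <= x k) -> (forall k, d * x k <= 1) ->
  2 <= d -> 1 <= \sum_k a k ->
  (\sum_k a k) * (\sum_k a k * x k)
    - (d - 1) / d ^+ 2 * (\sum_k a k) * (\sum_k a k - 1) <=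
  (\sum_k a k * x k) ^+ 2 + \sum_k a k * (x k - x k ^+ 2).
Proof.
set K := \sum_k a k; set s := \sum_k a k * x k.
move=> a_idem x_ge0 dx_le1 d_ge2 K_ge1.
(* with [u k := a k * (1 - d * x k) >= 0], [d ^+ 2] times the difference of the
   two sides is [(\sum_k u k) ^+ 2 - \sum_k u k ^+ 2 + (d - 2) (K - 1) \sum_k u k] *)
have a_ge0 k : 0 <= a k by rewrite -a_idem -expr2 sqr_ge0.
pose q := \sum_k a k * x k ^+ 2.
have sum_u : \sum_k a k * (1 - d * x k) = K - d * s.
  by rewrite /K /s mulr_sumr -sumrB; apply: eq_bigr => k _; ring.
have sum_u2 : \sum_k (a k * (1 - d * x k)) ^+ 2 = K - 2 * d * s + d ^+ 2 * q.
  rewrite /K /s /q !mulr_sumr -sumrB -big_split /=; apply: eq_bigr => k _.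
  by rewrite exprMn expr2 a_idem; ring.
have u_sum_ge0 : 0 <= K - d * s.
  by rewrite -sum_u sumr_ge0 // => k _; rewrite mulr_ge0 // subr_ge0.
have cauchy : K - 2 * d * s + d ^+ 2 * q <= (K - d * s) ^+ 2.
  rewrite -sum_u -sum_u2; apply: sum_sqr_le_sqr_sum => k.
  by rewrite mulr_ge0 // subr_ge0.
have -> : \sum_k a k * (x k - x k ^+ 2) = s - q.
  by rewrite /s /q -sumrB; apply: eq_bigr => k _; ring.
have d_neq0 : d != 0 by rewrite gt_eqF //; lra.
rewrite -subr_ge0.
have -> : s ^+ 2 + (s - q) - (K * s - (d - 1) / d ^+ 2 * K * (K - 1)) =
    ((K - d * s) ^+ 2 - (K - 2 * d * s + d ^+ 2 * q)
     + (d - 2) * (K - 1) * (K - d * s)) / d ^+ 2 by field.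
apply: divr_ge0; last exact: sqr_ge0.
by apply: addr_ge0; rewrite ?subr_ge0 // !mulr_ge0 // subr_ge0.
Qed.

Lemma rV_neq0_entry {R : zmodType} {n} {v : 'rV[R]_n} : v != 0 -> exists i, v 0 i != 0.
Proof.
move=> v_neq0; apply/existsP; apply: contraNT v_neq0 => /existsPn v0.
by apply/eqP/rowP => i; rewrite mxE; apply/eqP/negbNE.
Qed.

Section NormalizedAdjacency.
Variables (R : realType) (n : nat) (e : rel 'I_n) (d : R).
Hypotheses (e_sym : symmetric e) (d_ge2 : 2 <= d).
Hypothesis deg_ge : forall i, d <= (deg e i)%:R.

Definition adjr i j : R := (e i j)%:R.
Definition degr i : R := (deg e i)%:R.
Local Notation a := adjr.
Local Notation dg := degr.

Definition invdeg i := (dg i)^-1.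
Definition sqrtdeg i := Num.sqrt (dg i).
Definition nadj : 'M[R]_n := \matrix_(i, j) (a i j / (sqrtdeg i * sqrtdeg j)).
Definition wadj2 i j := \sum_k a i k * a k j * invdeg k.
Definition codeg k l := \sum_i a i k * a i l.

Lemma adj_sym i j : a i j = a j i. Proof. by rewrite /adjr e_sym. Qed.
Lemma adj_idem i j : a i j * a i j = a i j.
Proof. by rewrite /adjr; case: (e i j); rewrite ?mulr0 ?mulr1. Qed.
Lemma adj_ge0 i j : 0 <= a i j. Proof. exact: ler0n. Qed.

Lemma degE i : dg i = \sum_j a i j.
Proof.
rewrite /degr /deg -sum1dep_card natr_sum big_mkcond /=.
by apply: eq_bigr => j _; rewrite /adjr; case: (e i j).
Qed.

Lemma deg_gt0 i : 0 < dg i. Proof. by have := deg_ge i; have := d_ge2; lra. Qed.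
Lemma sqrtdeg_gt0 i : 0 < sqrtdeg i. Proof. by rewrite sqrtr_gt0 deg_gt0. Qed.
Lemma sqrtdeg_sqr i : sqrtdeg i ^+ 2 = dg i. Proof. by rewrite sqr_sqrtr // ltW ?deg_gt0. Qed.
Lemma invdeg_ge0 i : 0 <= invdeg i. Proof. by rewrite invr_ge0 ltW ?deg_gt0. Qed.
Lemma invdegK i : invdeg i * dg i = 1. Proof. by rewrite mulVf // gt_eqF ?deg_gt0. Qed.

Lemma nadj_sym : nadj^T = nadj.
Proof. by apply/matrixP => i j; rewrite !mxE adj_sym [sqrtdeg j * _]mulrC. Qed.

Lemma nadj2E i j : (nadj *m nadj) i j = wadj2 i j / (sqrtdeg i * sqrtdeg j).
Proof.
rewrite !mxE /wadj2 mulr_suml; apply: eq_bigr => k _; rewrite !mxE /invdeg -sqrtdeg_sqr.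
have := sqrtdeg_gt0 i; have := sqrtdeg_gt0 j; have := sqrtdeg_gt0 k.
by move=> *; field; rewrite !gt_eqF.
Qed.

Lemma wadj2_sym i j : wadj2 i j = wadj2 j i.
Proof.
by rewrite /wadj2; apply: eq_bigr => k _; rewrite (adj_sym j k) (adj_sym k i) [a k j * _]mulrC.
Qed.

Lemma sum_adj_invdeg : \sum_i \sum_k a i k * invdeg k = n%:R.
Proof.
rewrite exchange_big /= -[n in n%:R]card_ord -sumr_const; apply: eq_bigr => k _.
by rewrite -mulr_suml -(invdegK k) mulrC degE; under eq_bigr do rewrite adj_sym.
Qed.

Lemma nadj_moment2 : \sum_i dg i * (nadj *m nadj) i i = n%:R.
Proof.
rewrite -sum_adj_invdeg; apply: eq_bigr => i _.
rewrite nadj2E -expr2 sqrtdeg_sqr mulrC mulfVK ?gt_eqF ?deg_gt0 //.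
by apply: eq_bigr => k _; rewrite -(adj_sym i) adj_idem.
Qed.

Lemma nadj_moment4 : \sum_i dg i * (nadj *m nadj *m (nadj *m nadj)) i i =
  \sum_j invdeg j * \sum_i wadj2 i j ^+ 2.
Proof.
under [RHS]eq_bigr do rewrite mulr_sumr.
rewrite [RHS]exchange_big /=; apply: eq_bigr => i _.
rewrite mxE mulr_sumr; apply: eq_bigr => j _.
rewrite !nadj2E (wadj2_sym j i) /invdeg -!sqrtdeg_sqr.
have := sqrtdeg_gt0 i; have := sqrtdeg_gt0 j.
by move=> *; field; rewrite !gt_eqF.
Qed.

Lemma codeg_ge j k l : a j k * a j l + (k == l)%:R * (dg k - a j k) <= codeg k l.
Proof.
case: (eqVneq k l) => [<-|k_neq_l].
  rewrite mul1r adj_idem addrC subrK degE le_eqVlt; apply/orP; left; apply/eqP.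
  by apply: eq_bigr => i _; rewrite adj_idem adj_sym.
rewrite mul0r addr0 /codeg (bigD1 j) //= lerDl sumr_ge0 // => i _.
exact: mulr_ge0.
Qed.

Lemma sum_wadj2_sqr j : \sum_i wadj2 i j ^+ 2 =
  \sum_k \sum_l (a j k * invdeg k) * (a j l * invdeg l) * codeg k l.
Proof.
pose u k := a j k * invdeg k.
transitivity (\sum_i \sum_k \sum_l (a i k * u k) * (a i l * u l)).
  apply: eq_bigr => i _; rewrite expr2 -big_distrlr /=.
  by congr (_ * _); apply: eq_bigr => k _; rewrite /u (adj_sym k j); ring.
rewrite exchange_big /=; apply: eq_bigr => k _.
rewrite exchange_big /=; apply: eq_bigr => l _.
by rewrite /codeg /u mulr_sumr; apply: eq_bigr => i _; ring.
Qed.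

Lemma sum_wadj2_sqr_ge j :
  (\sum_k a j k * invdeg k) ^+ 2 + \sum_k a j k * (invdeg k - invdeg k ^+ 2)
    <= \sum_i wadj2 i j ^+ 2.
Proof.
pose u k := a j k * invdeg k.
rewrite sum_wadj2_sqr (_ : \sum_k _ = \sum_k \sum_l u k * u l * codeg k l) //.
have u_ge0 k : 0 <= u k by rewrite mulr_ge0 ?adj_ge0 ?invdeg_ge0.
apply: le_trans (_ : \sum_k \sum_l u k * u l *
    (a j k * a j l + (k == l)%:R * (dg k - a j k)) <= _); last first.
  by do 2![apply: ler_sum => ? _]; rewrite ler_wpM2l ?codeg_ge // mulr_ge0.
rewrite le_eqVlt; apply/orP; left; apply/eqP.
rewrite expr2 big_distrlr /= -big_split /=; apply: eq_bigr => k _.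
rewrite [RHS](eq_bigr (fun l => u k * u l * (a j k * a j l) +
  u k * u l * ((k == l)%:R * (dg k - a j k)))) => [|l _]; last by rewrite mulrDr.
rewrite big_split /=; congr (_ + _).
  by apply: eq_bigr => l _; rewrite /u -{1}(adj_idem j k) -{1}(adj_idem j l); ring.
rewrite (bigD1 k) //= big1 ?addr0 => [|l /negbTE l_neq_k]; last first.
  by rewrite eq_sym l_neq_k mul0r mulr0.
have inv2_deg : invdeg k ^+ 2 * dg k = invdeg k by rewrite expr2 -mulrA invdegK mulr1.
rewrite eqxx mul1r /u -{1}inv2_deg.
transitivity (a j k * a j k * invdeg k ^+ 2 * dg k - a j k * a j k * a j k * invdeg k ^+ 2).
  by rewrite !adj_idem; ring.
ring.
Qed.

Lemma nadj_moment4_ge : (1 + (d - 1) / d ^+ 2) * n%:R - (d - 1) / d ^+ 2 * \sum_i dg i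
  <= \sum_i dg i * (nadj *m nadj *m (nadj *m nadj)) i i.
Proof.
set c := (d - 1) / d ^+ 2; rewrite nadj_moment4.
have -> : (1 + c) * n%:R - c * \sum_i dg i =
    \sum_j (\sum_k a j k * invdeg k - c * (dg j - 1)).
  have sum_deg : \sum_j c * (dg j - 1) = c * \sum_j dg j - c * n%:R.
    by rewrite -mulr_sumr sumrB sumr_const card_ord mulrBr.
  by rewrite sumrB sum_adj_invdeg sum_deg; ring.
apply: ler_sum => j _.
have dinv_le1 k : d * invdeg k <= 1.
  by rewrite -(invdegK k) mulrC ler_wpM2l ?invdeg_ge0 //; apply: deg_ge.
have deg_ge1 : 1 <= dg j by have := deg_ge j; have := d_ge2; lra.
have := indicator_moment_ineq (adj_idem j) invdeg_ge0 dinv_le1 d_ge2.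
rewrite -degE -/c => /(_ deg_ge1) /le_trans /(_ (sum_wadj2_sqr_ge j)).
move/(ler_wpM2l (invdeg_ge0 j)); apply: le_trans.
set s := \sum_k _; rewrite le_eqVlt; apply/orP; left; apply/eqP.
transitivity ((invdeg j * dg j) * s - c * (invdeg j * dg j) * (dg j - 1)).
  by rewrite invdegK; ring.
ring.
Qed.

Lemma nadj_eigenvector_adj {nu} {v : 'rV[R]_n} : v *m nadj = nu *: v ->
  forall j, \sum_i a j i * (v 0 i / sqrtdeg i) = nu * dg j * (v 0 j / sqrtdeg j).
Proof.
move=> v_eig j; have rj := sqrtdeg_gt0 j.
transitivity (sqrtdeg j * (v *m nadj) 0 j).
  rewrite mxE mulr_sumr; apply: eq_bigr => i _; rewrite mxE (adj_sym j i).
  by have ri := sqrtdeg_gt0 i; field; rewrite !gt_eqF.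
by rewrite v_eig mxE -sqrtdeg_sqr; field; rewrite gt_eqF.
Qed.

Lemma nadj_eigenvalue_sqr_le1 nu : eigenvalue nadj nu -> nu ^+ 2 <= 1.
Proof.
move/eigenvalueP => [v v_eig v_neq0].
have [i0 vi0] := rV_neq0_entry v_neq0.
pose f i := v 0 i / sqrtdeg i.
have [j _ f_max] := @arg_maxP _ _ _ i0 predT (fun j => `|f j|) erefl.
have fj_gt0 : 0 < `|f j|.
  apply: lt_le_trans (f_max i0 erefl).
  by rewrite normr_gt0 mulf_neq0 // invr_eq0 gt_eqF // sqrtdeg_gt0.
have dj_gt0 := deg_gt0 j.
suff : `|nu| * (dg j * `|f j|) <= dg j * `|f j|.
  by rewrite ger_pMl ?mulr_gt0 // ler_norml => /andP[]; nra.
have -> : `|nu| * (dg j * `|f j|) = `|\sum_i a j i * f i|.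
  by rewrite (nadj_eigenvector_adj v_eig) !normrM (ger0_norm (ltW dj_gt0)) !mulrA.
apply: le_trans (ler_norm_sum _ _ _) _.
rewrite degE mulr_suml; apply: ler_sum => i _.
by rewrite normrM (ger0_norm (adj_ge0 j i)) ler_wpM2l ?adj_ge0 //; apply: f_max.
Qed.

Lemma nlapE (f : 'I_n -> R) j : nlap e f j = f j - invdeg j * \sum_i a j i * f i.
Proof.
rewrite /nlap /invdeg /degr big_mkcond /=; congr (_ - _ * _).
by apply: eq_bigr => i _; rewrite /adjr; case: (e j i); rewrite ?mul1r ?mul0r.
Qed.

Lemma nadj_moment2_lt : (0 < n)%N ->
  \sum_i dg i * (nadj *m nadj) i i < \sum_i dg i.
Proof.
move=> n_gt0; rewrite nadj_moment2 -[n in n%:R]card_ord -sumr_const.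
apply: ltr_sum => [|i _]; first by apply/hasP; exists (Ordinal n_gt0); rewrite ?mem_index_enum.
by have := deg_ge i; have := d_ge2; rewrite /degr; lra.
Qed.

Lemma exists_nlap_eigenvalue_near1 : (0 < n)%N ->
  exists2 lam, nlap_eigenvalue e lam & (1 - lam) ^+ 2 <= (d - 1) / d ^+ 2.
Proof.
move=> n_gt0.
have [|nu /eigenvalueP[v v_eig v_neq0] nu_small] :=
  symmx_small_eigenvalue nadj_sym degr ((d - 1) / d ^+ 2)
    (fun i => ltW (deg_gt0 i)) nadj_eigenvalue_sqr_le1 (nadj_moment2_lt n_gt0).
  by rewrite nadj_moment2; apply: nadj_moment4_ge.
exists (1 - nu); last by rewrite opprB addrC subrK.
pose f i := v 0 i / sqrtdeg i.
exists f; split.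
  have [i vi_neq0] := rV_neq0_entry v_neq0.
  by exists i; rewrite mulf_neq0 // invr_eq0 gt_eqF ?sqrtdeg_gt0.
move=> j; rewrite nlapE (nadj_eigenvector_adj v_eig) -/(f j).
by rewrite [nu * _]mulrC !mulrA invdegK mul1r /f; ring.
Qed.
End NormalizedAdjacency.

Arguments exists_nlap_eigenvalue_near1 {R n e d}.

Section Relabel.
Variables (T T' : finType) (adj : rel T) (g : T' -> T).
Hypothesis g_bij : bijective g.
Local Notation adj' := [rel x y | adj (g x) (g y)].

Lemma deg_relabel x : deg adj' x = deg adj (g x).
Proof.
rewrite /deg -(on_card_preimset (onW_bij _ g_bij)).
by apply: eq_card => y; rewrite !inE.
Qed.

Lemma nlap_relabel {R : realType} {f : T' -> R} {h : T -> R} x :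
  f =1 h \o g -> nlap adj' f x = nlap adj h (g x).
Proof.
move=> fE; rewrite /nlap deg_relabel fE /=; congr (_ - _ * _).
rewrite (reindex g) /=; last exact: onW_bij.
by apply: eq_bigr => y _; rewrite fE.
Qed.

Lemma nlap_eigenvalue_relabel {R : realType} {lam : R} :
  nlap_eigenvalue adj' lam -> nlap_eigenvalue adj lam.
Proof.
have [g' gK g'K] := g_bij; move=> [f [[x fx] hf]].
have fE : f =1 (f \o g') \o g by move=> y /=; rewrite gK.
exists (f \o g'); split; first by exists (g x); rewrite /= gK.
by move=> v; rewrite -[v]g'K -(nlap_relabel _ fE) hf /= gK.
Qed.
End Relabel.

Arguments nlap_eigenvalue_relabel {T T' adj g}.

Lemma mindeg_le (T : finType) (adj : rel T) v : (mindeg adj <= deg adj v)%N.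
Proof. by rewrite /mindeg -minEnat; apply: (bigmin_le (T := nat)). Qed.

Lemma normr_le_sqrt_div (R : rcfType) (x c d : R) :
  0 < d -> x ^+ 2 <= c / d ^+ 2 -> `|x| <= Num.sqrt c / d.
Proof.
move=> d_gt0; rewrite ler_pdivlMr ?exprn_gt0 // -exprMn => xd2_le.
have c_ge0 : 0 <= c by apply: le_trans xd2_le; apply: sqr_ge0.
by rewrite ler_pdivlMr // -(ger0_norm (ltW d_gt0)) -normrM -sqrtr_sqr ler_sqrt.
Qed.

Theorem mainTheorem4 (R : realType) (T : finType) (adj : rel T) :
  simple_graph adj -> connected_graph adj -> (3 <= #|T|)%N ->
  (2 <= mindeg adj)%N ->
  exists lam : R, nlap_eigenvalue adj lam /\
    `|1 - lam| <= Num.sqrt ((mindeg adj)%:R - 1) / (mindeg adj)%:R.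
Proof.
move=> [adj_sym _] _ T_ge3 mindeg_ge2.
pose e := [rel i j : 'I_#|T| | adj (enum_val i) (enum_val j)].
have e_sym : symmetric e by move=> i j; apply: adj_sym.
have d_ge2 : 2 <= (mindeg adj)%:R :> R by rewrite ler_nat.
have deg_ge i : (mindeg adj)%:R <= (deg e i)%:R :> R.
  by rewrite deg_relabel ?ler_nat ?mindeg_le //; apply: enum_val_bij.
have [|lam lam_eig lam_near1] := exists_nlap_eigenvalue_near1 e_sym d_ge2 deg_ge.
  exact: leq_trans T_ge3.
exists lam; split; first exact: (nlap_eigenvalue_relabel (adj := adj) (enum_val_bij T)).
by apply: normr_le_sqrt_div lam_near1; lra.
Qed.
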